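(* Let $G$ be a metrizable topological group. The following assertions are equivalent: (a) $G$ is separable; (b) $G$ is CCC; (c) $G$ is $\aleph_0$-bounded; (d) $C(G)$ has the countable sup property.
   Context: $G$ is CCC if every family of pairwise disjoint open subsets of $G$ is countable. $G$ is $\aleph_0$-bounded if for every nonempty open set $U\subseteq G$ there is a countable set $S\subseteq G$ with $G=U\cdot S=\bigcup_{s\in S}Us$. $C(G)$ is the vector lattice of real-valued continuous functions on $G$ with the pointwise order; a vector lattice has the countable sup property if every nonempty subset possessing a supremum contains a countable subset with the same supremum. *)

From HB Require Import structures.
From mathcomp Require Import all_boot all_order all_algebra.
From mathcomp Require Import all_classical all_reals all_analysis.
Set Implicit Arguments.
Unset Strict Implicit.
Unset Printing Implicit Defensive.
Import Order.TTheory GRing.Theory Num.Theory.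
Import numFieldTopology.Exports.
Local Open Scope classical_set_scope.
Local Open Scope ring_scope.

Definition topological_group (G : topologicalType)
    (mul : G -> G -> G) (inv : G -> G) (one : G) : Prop :=
  [/\ (forall x y z, mul x (mul y z) = mul (mul x y) z),
      (forall x, mul one x = x),
      (forall x, mul (inv x) x = one),
      continuous (fun p : G * G => mul p.1 p.2) &
      continuous inv].

Definition metrizable (R : realType) (G : topologicalType) : Prop :=
  exists d : G -> G -> R,
    [/\ (forall x y, 0 <= d x y),
        (forall x y, d x y = 0 <-> x = y),
        (forall x y, d x y = d y x),
        (forall x y z, d x z <= d x y + d y z) &
        (forall (x : G) (A : set G),
            nbhs x A <-> exists2 e : R, 0 < e & [set y | d x y < e] `<=` A)].

Definition separable (G : topologicalType) : Prop :=
  exists D : set G, countable D /\ dense D.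

Definition ccc (G : topologicalType) : Prop :=
  forall F : set (set G),
    (forall U, F U -> open U) -> trivIset F id -> countable F.

Definition aleph0_bounded (G : topologicalType) (mul : G -> G -> G) : Prop :=
  forall U : set G, open U -> U !=set0 ->
    exists S : set G, countable S /\
      [set: G] = \bigcup_(s in S) [set mul u s | u in U].

Definition is_sup_CG (R : realType) (G : topologicalType)
    (F : set (G -> R)) (f : G -> R) : Prop :=
  [/\ continuous f,
      (forall g, F g -> forall x, g x <= f x) &
      (forall h : G -> R, continuous h ->
         (forall g, F g -> forall x, g x <= h x) -> forall x, f x <= h x)].

Definition countable_sup_property (R : realType) (G : topologicalType) : Prop :=
  forall (F : set (G -> R)) (f : G -> R),
    (forall g, F g -> continuous g) -> F !=set0 -> is_sup_CG F f ->
    exists F0 : set (G -> R), [/\ F0 `<=` F, countable F0 & is_sup_CG F0 f].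

(* A countable dense set D yields the countable
   base of balls B(a, 1/(n+1)), a in D, and over a countable base every family
   of continuous functions has a countable subfamily with the same pointwise
   suprema: this gives (a) -> (d). For (d) -> (b), let F be a disjoint family
   of open sets: the continuous functions bounded by 1 that are nonzero on at
   most one member of F have supremum 1 in C(G), and a countable subfamily
   with supremum 1 must be nonzero somewhere on each nonempty member of F,
   since otherwise a continuous function vanishing at a point of that member
   and equal to 1 off a ball inside it would be a smaller upper bound. For
   (b) -> (a), a maximal family of disjoint balls of radius r/2 is countable
   and its centres form an r-net. Finally, if D is dense then G = U (D^-1),
   and conversely the translations needed for the balls of radius 1/(n+1)
   around the unit form a dense set. *)

From HB Require Import structures.
From mathcomp Require Import all_boot all_order all_algebra.
From mathcomp Require Import all_classical all_reals all_analysis.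
From mathcomp Require Import lra.
Import Order.TTheory GRing.Theory Num.Theory.
Import numFieldTopology.Exports.
Set Implicit Arguments.
Unset Strict Implicit.
Unset Printing Implicit Defensive.
Local Open Scope classical_set_scope.
Local Open Scope ring_scope.

Lemma countableU T (A B : set T) : countable A -> countable B -> countable (A `|` B).
Proof.
by move=> cA cB; rewrite -bigcup2E; apply: bigcup_countable => // -[|[|n]].
Qed.

Lemma natSinv_lt (R : realType) (r : R) : 0 < r -> exists n : nat, n.+1%:R^-1 < r.
Proof. by move=> /ltr_add_invr[n]; rewrite add0r; exists n. Qed.

Lemma is_sup_CG_cofinal (R : realType) (G : topologicalType) (F F0 : set (G -> R)) f :
  F0 `<=` F -> (forall g y c, F g -> c < g y -> exists2 g0, F0 g0 & c < g0 y) ->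
  is_sup_CG F f -> is_sup_CG F0 f.
Proof.
move=> F0F cof [fc fub fle]; split => // [g /F0F|h hc hub]; first exact: fub.
apply: fle => // g Fg y; rewrite leNgt; apply/negP => /(cof _ _ _ Fg)[g0 /hub/(_ y)].
by rewrite leNgt => /negP.
Qed.

Lemma second_countable_cofinal (R : realType) (G : topologicalType) (F : set (G -> R)) :
  @second_countable G -> (forall g, F g -> continuous g) ->
  exists F0 : set (G -> R), [/\ F0 `<=` F, countable F0 &
    forall g y c, F g -> c < g y -> exists2 g0, F0 g0 & c < g0 y].
Proof.
move=> [B Bc [_ Bbase]] Fc.
pose above (k : set G * rat) (g : G -> R) := forall y, k.1 y -> ratr k.2 < g y.
pose K := [set k | B k.1 /\ exists2 g, F g & above k g].
have /choice[pick pickP] : forall k, exists g, K k -> F g /\ above k g.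
  move=> k; have [[_ [g Fg gk]]|Kk] := pselect (K k); first by exists g.
  by exists (fun=> 0).
exists (pick @` K); split => [_ [k /pickP[Fk _] <-] //||g y c Fg].
- apply: sub_countable (card_image_le _ _) _.
  apply: sub_countable (countableX Bc (countableP [set: rat])).
  by apply: subset_card_le => -[U q] [].
- move=> /rat_in_itvoo[q]; rewrite in_itv /= => /andP[cq qg].
  have : nbhs y (g @^-1` [set t | ratr q < t]).
    by apply: (Fc g Fg y); apply: open_nbhs_nbhs; split; [exact: open_gt|].
  move=> /Bbase[U [BU Uy] Ug].
  have KU : K (U, q) by split => //; exists g => // z /Ug.
  exists (pick (U, q)); first exact: imageP.
  by have [_ /(_ y Uy)] := pickP _ KU; exact: lt_trans.
Qed.

Definition meets_at_most_one (T : Type) (F : set (set T)) (A : set T) :=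
  forall U V, F U -> F V -> U `&` A !=set0 -> V `&` A !=set0 -> U = V.

Lemma meets_at_most_one_sub T (F : set (set T)) (A B : set T) :
  B `<=` A -> meets_at_most_one F A -> meets_at_most_one F B.
Proof.
move=> BA FA U V FU FV /(subsetI_neq0 (@subset_refl _ U) BA) UA.
by move=> /(subsetI_neq0 (@subset_refl _ V) BA); exact: FA.
Qed.

Section topological_group.
Variables (G : topologicalType) (mul : G -> G -> G) (inv : G -> G) (one : G).
Hypothesis Ggroup : topological_group mul inv one.

Let mulA x y z : mul x (mul y z) = mul (mul x y) z. Proof. by case: Ggroup. Qed.
Let mul1g x : mul one x = x. Proof. by case: Ggroup. Qed.
Let mulVg x : mul (inv x) x = one. Proof. by case: Ggroup. Qed.
Let mul_continuous : continuous (fun p : G * G => mul p.1 p.2).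
Proof. by case: Ggroup. Qed.

Lemma mulgV x : mul x (inv x) = one.
Proof.
set e := mul x (inv x).
have idem : mul e e = e by rewrite -mulA (mulA (inv x)) mulVg mul1g.
by rewrite -(mulVg e) -[X in mul _ X]idem mulA mulVg mul1g.
Qed.

Lemma mulg1 x : mul x one = x.
Proof. by rewrite -(mulVg x) mulA mulgV mul1g. Qed.

Lemma invg1 : inv one = one.
Proof. by rewrite -[LHS]mulg1 mulVg. Qed.

Lemma mulKg x y : mul (inv x) (mul x y) = y.
Proof. by rewrite mulA mulVg mul1g. Qed.

Lemma mulgK x y : mul (mul y x) (inv x) = y.
Proof. by rewrite -mulA mulgV mulg1. Qed.

Lemma continuous_mull x : continuous (mul x).
Proof.
move=> y; apply: (@continuous_comp _ _ _ (pair x) (fun p => mul p.1 p.2)).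
  by apply: cvg_pair => //; exact: cvg_cst.
exact: mul_continuous.
Qed.

Lemma continuous_mulr x : continuous (mul^~ x).
Proof.
move=> y; apply: (@continuous_comp _ _ _ (pair^~ x) (fun p => mul p.1 p.2)).
  by apply: cvg_pair => //; exact: cvg_cst.
exact: mul_continuous.
Qed.

Lemma separable_aleph0_bounded : separable G -> aleph0_bounded mul.
Proof.
move=> [D [Dc Dd]] U oU [u Uu]; exists (inv @` D); split.
  exact: sub_countable (card_image_le _ _) Dc.
apply/seteqP; split => // x _.
have [a [Uxa Da]] : mul x @^-1` U `&` D !=set0.
  apply: Dd; last exact: (continuousP _).1 (@continuous_mull x) U oU.
  by exists (mul (inv x) u); rewrite /= mulA mulgV mul1g.
by exists (inv a); [exists a | exists (mul x a) => //; exact: mulgK].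
Qed.

End topological_group.

Definition is_metric_topology (R : realType) (G : topologicalType) (d : G -> G -> R) :=
  [/\ (forall x y, 0 <= d x y),
      (forall x y, d x y = 0 <-> x = y),
      (forall x y, d x y = d y x),
      (forall x y z, d x z <= d x y + d y z) &
      (forall (x : G) (A : set G),
          nbhs x A <-> exists2 e : R, 0 < e & [set y | d x y < e] `<=` A)].

Section metric_topology.
Variables (R : realType) (G : topologicalType) (d : G -> G -> R).
Hypothesis dm : is_metric_topology d.

Let d_ge0 x y : 0 <= d x y. Proof. by case: dm. Qed.
Let dxx x : d x x = 0. Proof. by case: dm => _ /(_ x x)[_ ->]. Qed.
Let d_sym x y : d x y = d y x. Proof. by case: dm. Qed.
Let d_triangle x y z : d x z <= d x y + d y z. Proof. by case: dm. Qed.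
Let nbhs_dP x A : nbhs x A <-> exists2 e : R, 0 < e & [set y | d x y < e] `<=` A.
Proof. by case: dm. Qed.

Local Notation dball x r := [set y | d x y < r].

Lemma open_dball x r : open (dball x r).
Proof.
rewrite openE => y /= xy; apply/nbhs_dP; exists (r - d x y); first by rewrite subr_gt0.
by move=> z /= yz; have := d_triangle x y z; lra.
Qed.

Lemma open_contains_dball (A : set G) x : open A -> A x -> exists2 r, 0 < r & dball x r `<=` A.
Proof. by rewrite openE => /[apply] /nbhs_dP. Qed.

Lemma continuous_preimage_contains_dball (f : G -> R) (O : set R) x : continuous f -> open O -> O (f x) ->
  exists2 r, 0 < r & dball x r `<=` f @^-1` O.
Proof. by move=> fc oO; apply: open_contains_dball; exact: (continuousP f).1 fc O oO. Qed.

Lemma dnet_dense (D : set G) :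
  (forall x r, 0 < r -> exists2 a, D a & d x a < r) -> dense D.
Proof.
move=> Dnet O [x Ox] oO; have [r r0 xrO] := open_contains_dball oO Ox.
by have [a Da xa] := Dnet x r r0; exists a; split => //; exact: xrO.
Qed.

Lemma continuous_dist x : continuous (d x).
Proof.
move=> y A /nbhs_ballP[e e0 eA]; apply/nbhs_dP; exists e => // z /= yz; apply: eA.
have := d_triangle x y z; have := d_triangle x z y; rewrite (d_sym z y) => ? ?.
by rewrite /ball /= ltr_norml; apply/andP; split; lra.
Qed.

Definition bump x r y := Num.max 0 (1 - d x y / r).

Lemma continuous_bump x r : continuous (bump x r).
Proof.
move=> y; apply: (@continuous_max _ _ (fun=> 0) (fun y => 1 - d x y / r)).
  exact: cst_continuous.
apply: continuousB; first exact: cst_continuous.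
by apply: continuousM; [exact: continuous_dist | exact: cst_continuous].
Qed.

Lemma bump_center x r : bump x r x = 1.
Proof. by rewrite /bump dxx mul0r subr0 max_r ?ler01. Qed.

Lemma bump_le1 x r y : 0 < r -> bump x r y <= 1.
Proof.
by move=> r0; rewrite /bump ge_max ler01 gerBl divr_ge0 ?d_ge0 ?ltW.
Qed.

Lemma bump_eq0 x r y : 0 < r -> ~ dball x r y -> bump x r y = 0.
Proof.
move=> r0 /negP; rewrite -leNgt => rxy; apply/max_l.
by rewrite subr_le0 ler_pdivlMr // mul1r.
Qed.

Lemma separable_second_countable : separable G -> @second_countable G.
Proof.
move=> [D [Dc Dd]].
exists ((fun k => dball k.1 k.2.+1%:R^-1) @` (D `*` [set: nat])).
  exact: sub_countable (card_image_le _ _) (countableX Dc (countableP _)).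
split=> [_ [k _ <-]|x A /nbhs_dP[r r0 xrA]]; first exact: open_dball.
have [n nr] : exists n : nat, n.+1%:R^-1 < r / 2 by apply: natSinv_lt; lra.
have [a [xa Da]] : dball x n.+1%:R^-1 `&` D !=set0.
  by apply: Dd; [exists x; rewrite /= dxx | exact: open_dball].
exists (dball a n.+1%:R^-1); first by split; [exists (a, n) | rewrite /= d_sym].
move=> z /= az; apply: xrA; have := d_triangle x a z.
(* [lra] fails on the inverse of a natural cast, hence the generalization. *)
by move: xa az nr => /=; move: (n.+1%:R^-1) => e; lra.
Qed.

Lemma separable_countable_sup : separable G -> countable_sup_property R G.
Proof.
move=> /separable_second_countable sG F f Fc _ Fsup.
have [F0 [F0F F0c cof]] := second_countable_cofinal sG Fc.
by exists F0; split => //; exact: is_sup_CG_cofinal Fsup.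
Qed.

Lemma exists_dball_meets_at_most_one (F : set (set G)) x r :
  (forall U, F U -> open U) -> trivIset F id -> 0 < r ->
  exists y s, [/\ d x y < r, 0 < s & meets_at_most_one F (dball y s)].
Proof.
move=> Fo Ft r0.
have [[U FU [y [Uy xy]]]|Fx] := pselect (exists2 U, F U & U `&` dball x r !=set0).
  have [s s0 ysU] := open_contains_dball (Fo U FU) Uy.
  exists y, s; split => // V W FV FW /(subsetI_neq0 (@subset_refl _ V) ysU) VU.
  move=> /(subsetI_neq0 (@subset_refl _ W) ysU) WU.
  by rewrite (Ft _ _ FV FU VU) (Ft _ _ FW FU WU).
exists x, r; split => //; first by rewrite dxx.
by move=> V W FV _ Vx; case: Fx; exists V.
Qed.

Definition single_support_fun (F : set (set G)) := [set g : G -> R |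
  [/\ continuous g, forall y, g y <= 1 & meets_at_most_one F [set y | g y != 0]]].

Lemma is_sup_single_support_fun (F : set (set G)) :
  (forall U, F U -> open U) -> trivIset F id ->
  is_sup_CG (single_support_fun F) (fun=> 1).
Proof.
move=> Fo Ft; split=> [|g [] //|h hc hub x]; first exact: cst_continuous.
rewrite leNgt; apply/negP => hx1.
have [r r0 xrh] := continuous_preimage_contains_dball hc (@open_lt _ 1) hx1.
have [y [s [xy s0 ys]]] := exists_dball_meets_at_most_one x Fo Ft r0.
have : single_support_fun F (bump y s).
  split=> [|z|]; [exact: continuous_bump | exact: bump_le1 |].
  apply: meets_at_most_one_sub ys => z /eqP bz; apply: contra_notP bz => yz.
  exact: bump_eq0.
by move=> /hub/(_ y); rewrite bump_center leNgt (xrh y xy).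
Qed.

Lemma sup_one_meets_open (F0 : set (G -> R)) :
  (forall g, F0 g -> forall y, g y <= 1) -> is_sup_CG F0 (fun=> 1) ->
  forall U, open U -> U !=set0 -> exists2 g, F0 g & U `&` [set y | g y != 0] !=set0.
Proof.
move=> F0le1 [_ _ F0least] U oU [x Ux]; apply: contrapT => F0U.
have [r r0 xrU] := open_contains_dball oU Ux.
have vanish g y : F0 g -> U y -> g y = 0.
  move=> F0g Uy; apply: contra_notP F0U => gy.
  by exists g => //; exists y; split => //; exact/eqP.
have : 1 <= 1 - bump x r x.
  apply: (F0least (fun y => 1 - bump x r y)) => [y|g F0g y].
    apply: continuousB; [exact: cst_continuous | exact: continuous_bump].
  have [xy|xy] := pselect (dball x r y).
    by rewrite (vanish g y F0g (xrU _ xy)) subr_ge0 bump_le1.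
  by rewrite bump_eq0 // subr0 F0le1.
by rewrite bump_center subrr ler10.
Qed.

Lemma countable_sup_ccc : countable_sup_property R G -> ccc G.
Proof.
move=> csp F Fo Ft.
have SFc g : single_support_fun F g -> continuous g by case.
have SF0 : single_support_fun F (fun=> 0).
  by split=> // [|U V _ _ [? [_ /eqP]]]; [exact: cst_continuous|].
have [F0 [F0S F0c F0sup]] :=
  csp _ _ SFc (ex_intro _ _ SF0) (is_sup_single_support_fun Fo Ft).
have F0le1 g : F0 g -> forall y, g y <= 1 by move=> /F0S[].
have /choice[pick pickP] : forall U, exists g, F U -> U !=set0 ->
    F0 g /\ U `&` [set y | g y != 0] !=set0.
  move=> U; have [[FU U0]|FU0] := pselect (F U /\ U !=set0).
    by have [g F0g gU] := sup_one_meets_open F0le1 F0sup (Fo U FU) U0; exists g.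
  by exists (fun=> 0) => FU U0; case: FU0.
have : countable [set U | F U /\ U !=set0].
  move/countable_injP: F0c => [phi phi_inj]; apply/countable_injP.
  exists (phi \o pick) => U V /set_mem[FU U0] /set_mem[FV V0] /=.
  have [F0U pU] := pickP U FU U0; have [F0V pV] := pickP V FV V0.
  move=> /(phi_inj _ _ (mem_set F0U) (mem_set F0V)) pUV.
  by have [_ _] := F0S _ F0U; apply => //; rewrite pUV.
move=> cF; apply: sub_countable (countableU cF (countable1 set0)).
apply: subset_card_le => U FU; have [->|/set0P U0] := eqVneq U set0; [right|left] => //.
Qed.

Lemma ccc_countable_net : ccc G ->
  forall r : R, 0 < r -> exists2 E, countable E & forall x, exists2 a, E a & d x a < r.
Proof.
move=> Gccc r r0.
have [E [_ Edisj Emax]] := ex_maximal_disjoint_subcollection (fun a => dball a (r / 2)) setT.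
have close x a : dball x (r / 2) `&` dball a (r / 2) !=set0 -> d x a < r.
  by move=> [z [/= xz az]]; have := d_triangle x z a; rewrite (d_sym z a); lra.
exists E.
  have Ens a : E a -> dball a (r / 2) !=set0 by exists a; rewrite /= dxx; lra.
  rewrite -(eq_countable (inj_card_eq (trivIset_inj Ens Edisj))).
  apply: Gccc; first by move=> _ [a _ <-]; exact: open_dball.
  exact: trivIset_image.
move=> x; apply: contrapT => xfar; apply: (Emax (x |` E)) => //.
  split=> [a Ea|xE]; first by right.
  by apply: xfar; exists x; [apply: xE; left | rewrite dxx].
move=> a b [->|Ea] [->|Eb] ab //; last exact: Edisj.
  by case: xfar; exists b => //; exact: close.
by case: xfar; exists a => //; apply: close; rewrite setIC.
Qed.

Lemma ccc_separable : ccc G -> separable G.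
Proof.
move=> Gccc; have /choice[E EP] : forall n : nat, exists E,
    countable E /\ forall x, exists2 a, E a & d x a < n.+1%:R^-1.
  move=> n; have n0 : 0 < n.+1%:R^-1 :> R by rewrite invr_gt0 ltr0Sn.
  by have [E Ec Enet] := ccc_countable_net Gccc n0; exists E.
exists (\bigcup_n E n); split; first by apply: bigcup_countable => // n _; case: (EP n).
apply: dnet_dense => x r /natSinv_lt[n nr].
by have [a Ea xa] := (EP n).2 x; exists a; [exists n | exact: lt_trans nr].
Qed.

Lemma aleph0_bounded_separable (mul : G -> G -> G) inv one :
  topological_group mul inv one -> aleph0_bounded mul -> separable G.
Proof.
move=> Gg Gab; have /choice[S SP] : forall n : nat, exists S, countable S /\
    [set: G] = \bigcup_(s in S) [set mul u s | u in dball one n.+1%:R^-1].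
  by move=> n; apply: Gab; [exact: open_dball | exists one; rewrite /= dxx].
exists (\bigcup_n S n); split; first by apply: bigcup_countable => // n _; case: (SP n).
move=> O [x Ox] oO.
have oOx : open [set v | O (mul (inv v) x)].
  have ivx : continuous (mul^~ x \o inv).
    move=> v; apply: continuous_comp; first by case: Gg => _ _ _ _; apply.
    exact: (@continuous_mulr _ _ _ _ Gg x).
  exact: (continuousP _).1 ivx _ oO.
have Oone : O (mul (inv one) x) by rewrite (invg1 Gg); case: Gg => _ ->.
have [r r0 rO] := open_contains_dball oOx Oone.
have [n nr] := natSinv_lt r0.
have : [set: G] x by [].
rewrite (SP n).2 => -[s Sns [u xu ux]]; exists s; split; last by exists n.
by have /= := rO u (lt_trans xu nr); rewrite -ux (mulKg Gg).
Qed.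

End metric_topology.

Theorem theorem4p10 (R : realType) (G : topologicalType)
    (mul : G -> G -> G) (inv : G -> G) (one : G) :
  topological_group mul inv one -> metrizable R G ->
  [<-> separable G; ccc G; aleph0_bounded mul; countable_sup_property R G].
Proof.
move=> Gg [d dm].
have sep_csp := separable_countable_sup dm.
have csp_ccc := countable_sup_ccc dm.
have ccc_sep := ccc_separable dm.
have sep_ab := separable_aleph0_bounded Gg.
have ab_sep := aleph0_bounded_separable dm Gg.
by tfae => [/sep_csp/csp_ccc | /ccc_sep/sep_ab | /ab_sep/sep_csp | /csp_ccc/ccc_sep].
Qed.
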